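(* Let $G$ be a connected reductive linear algebraic group over an algebraically closed field $k$ of characteristic $p>0$ with Lie algebra $\mathfrak{g}$, and let $K\le G$ be a closed subgroup with Lie algebra $\mathfrak{k}$. Let $\mathbf{h}=(h_1,\dots,h_n)\in N_G(K)^n$. Suppose that there is a vector space decomposition $\mathfrak{g}=\mathfrak{k}\oplus\mathfrak{m}$ such that both $\mathfrak{k}$ and $\mathfrak{m}$ are stable under $\mathrm{Ad}_G(h_i)$ for $i=1,\dots,n$, and that the orbit map $G\to G\cdot\mathbf{h}\subseteq G^n$ is separable. Then the orbit map $K\to K\cdot\mathbf{h}$ is separable.
   Context: $N_G(K)$ is the normalizer of $K$ in $G$. $G$ (and $K$) act on $G^n$ by simultaneous conjugation $g\cdot(g_1,\dots,g_n)=(gg_1g^{-1},\dots,gg_ng^{-1})$. An orbit map $g\mapsto g\cdot\mathbf{h}$ onto its orbit is separable if it is a separable morphism, equivalently its differential at the identity is surjective onto the tangent space of the orbit at $\mathbf{h}$. *)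

From HB Require Import structures.
From mathcomp Require Import all_boot all_order all_algebra.
From mathcomp Require Import mpoly.
Set Implicit Arguments. Unset Strict Implicit. Unset Printing Implicit Defensive.
Import GRing.Theory.
Local Open Scope ring_scope.

(* Linear algebraic groups are realised concretely as Zariski-closed subgroups
   of GL_N(k), k algebraically closed.  Polynomial functions on the affine
   space M_N(k)^n are elements of {mpoly k[n*(N*N)]}, the coordinates of a
   tuple (g_1,...,g_n) being the entries of the g_i. *)

Section AlgGroups.
Variables (k : closedFieldType) (N : nat).

Definition mx := 'M[k]_N.

Definition coords (n : nat) (h : 'I_n -> mx) : 'I_(n * (N * N)) -> k :=
  fun i => mxvec (\matrix_(j < n) mxvec (h j)) 0 i.

Definition evalt (n : nat) (f : {mpoly k[n * (N * N)]}) (h : 'I_n -> mx) : k :=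
  f.@[coords h].

Definition dpoly (n : nat) (f : {mpoly k[n * (N * N)]}) (h v : 'I_n -> mx) : k :=
  \sum_(i < n * (N * N)) (mderiv i f).@[coords h] * coords v i.

Definition vanishes (n : nat) (S : ('I_n -> mx) -> Prop) (f : {mpoly k[n * (N * N)]}) :=
  forall h, S h -> evalt f h = 0.

(* Zariski tangent space at h of (the closure of) S, as a subspace of M_N^n *)
Definition tangent (n : nat) (S : ('I_n -> mx) -> Prop) (h : 'I_n -> mx)
  (v : 'I_n -> mx) : Prop :=
  forall f, vanishes S f -> dpoly f h v = 0.

Definition single (A : mx) : 'I_1 -> mx := fun _ => A.
Definition as1 (S : mx -> Prop) : ('I_1 -> mx) -> Prop :=
  fun h => S (h ord0).

Definition closed_subgroup (G : mx -> Prop) : Prop :=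
  [/\ G 1%:M,
      (forall g, G g -> g \in unitmx),
      (forall g h, G g -> G h -> G (g *m h)),
      (forall g, G g -> G (invmx g)) &
      exists F : {mpoly k[1 * (N * N)]} -> Prop,
        forall g, g \in unitmx -> (G g <-> forall f, F f -> evalt f (single g) = 0)].

(* connected (= irreducible): the vanishing ideal is prime *)
Definition connected_grp (G : mx -> Prop) : Prop :=
  forall f1 f2 : {mpoly k[1 * (N * N)]},
    vanishes (as1 G) (f1 * f2) -> vanishes (as1 G) f1 \/ vanishes (as1 G) f2.

Definition unipotent (g : mx) : Prop := (g - 1%:M) ^+ N = 0.

Definition normal_in (U G : mx -> Prop) : Prop :=
  (forall u, U u -> G u) /\ forall g u, G g -> U u -> U (g *m u *m invmx g).

(* reductive: trivial unipotent radical, i.e. no nontrivial closed connected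
   normal subgroup consisting of unipotent elements *)
Definition reductive (G : mx -> Prop) : Prop :=
  forall U, closed_subgroup U -> connected_grp U -> normal_in U G ->
    (forall u, U u -> unipotent u) -> forall u, U u -> u = 1%:M.

Definition lie (G : mx -> Prop) (X : mx) : Prop :=
  tangent (as1 G) (single 1%:M) (single X).

Definition normalizer (G K : mx -> Prop) (h : mx) : Prop :=
  G h /\ forall x, K x <-> K (h *m x *m invmx h).

Definition orbit (n : nat) (H : mx -> Prop) (h : 'I_n -> mx) : ('I_n -> mx) -> Prop :=
  fun y => exists g, H g /\ y = (fun i => g *m h i *m invmx g).

(* differential at 1 of the orbit map g |-> g.h *)
Definition dorbit (n : nat) (h : 'I_n -> mx) (X : mx) : 'I_n -> mx :=
  fun i => X *m h i - h i *m X.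

(* separability of the orbit map H -> H.h : its differential at the identity
   is surjective onto the tangent space of the orbit at h *)
Definition orbit_separable (n : nat) (H : mx -> Prop) (h : 'I_n -> mx) : Prop :=
  forall v, tangent (orbit H h) h v -> exists2 X, lie H X & v = dorbit h X.

Definition subspace (V : mx -> Prop) : Prop :=
  V 0 /\ forall (a : k) X Y, V X -> V Y -> V (a *: X + Y).

Definition Ad (h X : mx) : mx := h *m X *m invmx h.

End AlgGroups.

From Pilot Require Import Defs.
From HB Require Import structures.
From mathcomp Require Import all_boot all_order all_algebra.
From mathcomp Require Import mpoly.
From Stdlib Require Import FunctionalExtensionality.
Set Implicit Arguments. Unset Strict Implicit. Unset Printing Implicit Defensive.
Import GRing.Theory.
Local Open Scope ring_scope.

(* Write v = dorbit h X with X in Lie(G) and X = Y + Z along Lie(K) + m.  Since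
   h_i normalizes K, the map y |-> y_i h_i^-1 sends K.h into K, so its
   differential sends v to X - Ad(h_i) X in Lie(K).  Subtracting
   Y - Ad(h_i) Y leaves Z - Ad(h_i) Z, which lies in Lie(K) and in m, hence
   vanishes: Z commutes with every h_i and v = dorbit h Y. *)

Section DirectionalDerivative.
Variable R : comNzRingType.

Definition mdiff n (a w : 'I_n -> R) (p : {mpoly R[n]}) : R :=
  \sum_(i < n) (p^`M(i)).@[a] * w i.

Lemma mdiffD n a w (p q : {mpoly R[n]}) :
  mdiff a w (p + q) = mdiff a w p + mdiff a w q.
Proof.
by rewrite /mdiff -big_split; apply: eq_bigr => i _; rewrite mderivD mevalD mulrDl.
Qed.

Lemma mdiffC n a w c : mdiff a w (c%:MP : {mpoly R[n]}) = 0.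
Proof. by rewrite /mdiff big1 // => i _; rewrite mderivC meval0 mul0r. Qed.

Lemma mdiffZ n a w c (p : {mpoly R[n]}) : mdiff a w (c *: p) = c * mdiff a w p.
Proof.
by rewrite /mdiff mulr_sumr; apply: eq_bigr => i _; rewrite mderivZ mevalZ mulrA.
Qed.

Lemma mdiffM n a w (p q : {mpoly R[n]}) :
  mdiff a w (p * q) = mdiff a w p * q.@[a] + p.@[a] * mdiff a w q.
Proof.
rewrite /mdiff mulr_suml mulr_sumr -big_split; apply: eq_bigr => i _.
by rewrite mderivM mevalD !mevalM mulrDl mulrAC mulrA.
Qed.

Lemma mdiff_sum n a w I (r : seq I) (P : pred I) (F : I -> {mpoly R[n]}) :
  mdiff a w (\sum_(x <- r | P x) F x) = \sum_(x <- r | P x) mdiff a w (F x).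
Proof. by apply: big_morph; [exact: mdiffD | rewrite -mpolyC0 mdiffC]. Qed.

Lemma mderivXU n (i j : 'I_n) : ('X_j : {mpoly R[n]})^`M(i) = (j == i)%:R%:MP.
Proof.
rewrite mderivX mnm1E; case: eqP => [->|_]; last by rewrite scale0r.
have ->: (U_(i) - U_(i) = 0)%MM by apply/mnmP => l; rewrite mnmBE mnm0E subnn.
by rewrite mpolyX0 scale1r.
Qed.

Lemma mdiffX n a w (j : 'I_n) : mdiff a w ('X_j : {mpoly R[n]}) = w j.
Proof.
rewrite /mdiff (bigD1 j) //= big1 ?addr0 => [|i /negbTE ij].
  by rewrite mderivXU eqxx mevalC mul1r.
by rewrite mderivXU eq_sym ij mevalC mul0r.
Qed.

Lemma eq_mdiff n (a1 a2 w1 w2 : 'I_n -> R) p :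
  a1 =1 a2 -> w1 =1 w2 -> mdiff a1 w1 p = mdiff a2 w2 p.
Proof.
by move=> ea ew; apply: eq_bigr => i _; rewrite (meval_eq _ ea) ew.
Qed.

Lemma mdiff_comp n l (lq : n.-tuple {mpoly R[l]}) a w (p : {mpoly R[n]}) :
  mdiff a w (p \mPo lq) =
  mdiff (fun j => (tnth lq j).@[a]) (fun j => mdiff a w (tnth lq j)) p.
Proof.
set b := fun j => _; set u := fun j => _.
pose chain (p : {mpoly R[n]}) := mdiff a w (p \mPo lq) = mdiff b u p.
have chainM p1 p2 : chain p1 -> chain p2 -> chain (p1 * p2).
  by rewrite /chain rmorphM !mdiffM => -> ->; rewrite !comp_mpoly_meval.
have chainXm mm : chain 'X_[mm].
  have chain1 : chain 1 by rewrite /chain comp_mpoly1 -mpolyC1 !mdiffC.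
  rewrite mpolyXE_id; apply: (big_ind chain) => // i _.
  elim: (mm i) => [|e IH]; rewrite ?expr0 // exprS; apply: chainM IH.
  by rewrite /chain comp_mpolyXU mdiffX -tnth_nth.
elim/mpolyind: p => [|c mm p _ _ IH].
  by rewrite /chain comp_mpoly0 -mpolyC0 !mdiffC.
by rewrite /chain comp_mpolyD comp_mpolyZ !mdiffD !mdiffZ IH chainXm.
Qed.

End DirectionalDerivative.

Section TangentSpaces.
Variables (k : closedFieldType) (N n : nat).
Implicit Types (S : ('I_n -> mx k N) -> Prop) (u w y : 'I_n -> mx k N).

Lemma dpolyE (f : {mpoly k[n * (N * N)]}) y w :
  dpoly f y w = mdiff (coords y) (coords w) f.
Proof. by []. Qed.

Lemma coordsB u w l : coords (fun j => u j - w j) l = coords u l - coords w l.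
Proof.
rewrite /coords.
have ->: \matrix_(j < n) mxvec (u j - w j) =
         \matrix_(j < n) mxvec (u j) - \matrix_(j < n) mxvec (w j).
  by apply/matrixP => r c; rewrite !mxE linearB !mxE.
by rewrite linearB !mxE.
Qed.

Lemma tangentB S y u w :
  tangent S y u -> tangent S y w -> tangent S y (fun j => u j - w j).
Proof.
move=> tu tw f vf; rewrite dpolyE /mdiff.
under eq_bigr => i _ do rewrite coordsB mulrBr.
rewrite sumrB.
by move: (tu f vf) (tw f vf); rewrite !dpolyE /mdiff => -> ->; rewrite subr0.
Qed.

Lemma tangentS S1 S2 y w :
  (forall x, S1 x -> S2 x) -> tangent S1 y w -> tangent S2 y w.
Proof. by move=> S12 t1 f vf; apply: t1 => x /S12; apply: vf. Qed.

Definition var_mx (i0 : 'I_n) : 'M[{mpoly k[n * (N * N)]}]_N :=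
  \matrix_(a, b) 'X_(mxvec_index i0 (mxvec_index a b)).

Definition poly_coords (M : 'M[{mpoly k[n * (N * N)]}]_N)
  (j : 'I_(1 * (N * N))) : {mpoly k[n * (N * N)]} :=
  mxvec (\matrix_(_ < 1) mxvec M) 0 j.

(* The polynomial map y |-> y_i0 *m M, with values in 1-tuples. *)
Definition rmul_tuple i0 (M : 'M[k]_N) : (1 * (N * N)).-tuple {mpoly k[n * (N * N)]} :=
  [tuple poly_coords (var_mx i0 *m map_mx (@mpolyC _ k) M) j | j < 1 * (N * N)].

Lemma map_poly_coords (F : {mpoly k[n * (N * N)]} -> k) M j :
  F (poly_coords M j) = coords (single (map_mx F M)) j.
Proof.
rewrite /poly_coords /coords /single.
have -> : F (mxvec (\matrix_(_ < 1) mxvec M) 0 j) =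
          map_mx F (mxvec (\matrix_(_ < 1) mxvec M)) 0 j by rewrite mxE.
rewrite map_mxvec.
by congr (mxvec _ 0 j); apply/matrixP => a b; rewrite !mxE -map_mxvec mxE.
Qed.

Lemma coords_var y i0 (a b : 'I_N) :
  coords y (mxvec_index i0 (mxvec_index a b)) = y i0 a b.
Proof. by rewrite /coords mxvecE mxE mxvecE. Qed.

Lemma meval_rmul_tuple y i0 M j :
  (tnth (rmul_tuple i0 M) j).@[coords y] = coords (single (y i0 *m M)) j.
Proof.
rewrite tnth_mktuple map_poly_coords; congr (coords (single _) j).
apply/matrixP => a b; rewrite !mxE rmorph_sum; apply: eq_bigr => c _.
by rewrite /var_mx !mxE rmorphM /= mevalXU mevalC coords_var.
Qed.

Lemma mdiff_rmul_tuple y w i0 M j :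
  mdiff (coords y) (coords w) (tnth (rmul_tuple i0 M) j) =
  coords (single (w i0 *m M)) j.
Proof.
rewrite tnth_mktuple map_poly_coords; congr (coords (single _) j).
apply/matrixP => a b; rewrite !mxE mdiff_sum; apply: eq_bigr => c _.
by rewrite /var_mx !mxE mdiffM mdiffC mdiffX mevalC mulr0 addr0 coords_var.
Qed.

Lemma tangent_rmul S (T : mx k N -> Prop) i0 M y w :
  (forall x, S x -> T (x i0 *m M)) -> tangent S y w ->
  tangent (as1 T) (single (y i0 *m M)) (single (w i0 *m M)).
Proof.
move=> ST tw f vf.
have vfM : vanishes S (f \mPo rmul_tuple i0 M).
  move=> x Sx; rewrite /evalt comp_mpoly_meval.
  by under meval_eq => j do rewrite meval_rmul_tuple; apply: vf; apply: ST.
rewrite -(tw _ vfM) dpolyE mdiff_comp; apply: eq_mdiff => j.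
  by rewrite meval_rmul_tuple.
by rewrite mdiff_rmul_tuple.
Qed.

End TangentSpaces.

Section Orbits.
Variables (k : closedFieldType) (N n : nat).
Implicit Types (G K : mx k N -> Prop) (h : 'I_n -> mx k N).

Lemma orbitS G K h y : (forall x, K x -> G x) -> Defs.orbit K h y -> Defs.orbit G h y.
Proof. by move=> KG [g [Kg ->]]; exists g; split => //; apply: KG. Qed.

Lemma dorbit_mulmxV h X i :
  h i \in unitmx -> dorbit h X i *m invmx (h i) = X - Ad (h i) X.
Proof. by move=> hu; rewrite mulmxBl -mulmxA mulmxV // mulmx1. Qed.

(* g h_i g^-1 h_i^-1 = g (h_i g^-1 h_i^-1) lies in K as h_i normalizes K. *)
Lemma orbit_mulmxV_normalizer G K h i y :
  closed_subgroup K -> normalizer G K (h i) -> Defs.orbit K h y ->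
  K (y i *m invmx (h i)).
Proof.
move=> [_ _ KM KV _] [_ hK] [g [Kg ->]].
have Kc := proj1 (hK (invmx g)) (KV g Kg).
by rewrite -!mulmxA; apply: KM; rewrite // !mulmxA.
Qed.

Lemma lie_dorbit_mulmxV G K h i X :
  closed_subgroup K -> normalizer G K (h i) -> h i \in unitmx ->
  tangent (Defs.orbit K h) h (dorbit h X) -> lie K (X - Ad (h i) X).
Proof.
move=> cK hN hu tX; rewrite -dorbit_mulmxV // /lie -(mulmxV hu).
exact: tangent_rmul (fun y => orbit_mulmxV_normalizer cK hN) tX.
Qed.

End Orbits.

Section Decomposition.
Variables (k : closedFieldType) (N : nat) (K m : mx k N -> Prop).
Implicit Types h X Y Z : mx k N.

Lemma lieB X Y : lie K X -> lie K Y -> lie K (X - Y).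
Proof. exact: tangentB. Qed.

Lemma AdD h X Y : Ad h (X + Y) = Ad h X + Ad h Y.
Proof. by rewrite /Ad mulmxDr mulmxDl. Qed.

Lemma Ad_fixed_of_decomposition h Y Z :
  subspace m -> (forall X, lie K X -> m X -> X = 0) ->
  lie K Y -> lie K (Ad h Y) -> m Z -> m (Ad h Z) ->
  lie K (Y + Z - Ad h (Y + Z)) -> Ad h Z = Z.
Proof.
move=> [_ msub] mK lY lAY mZ mAZ lX.
have eZ : Z - Ad h Z = (Y + Z - Ad h (Y + Z)) - (Y - Ad h Y).
  by rewrite AdD opprD addrACA addrC addrK.
have lZ : lie K (Z - Ad h Z) by rewrite eZ; apply: lieB => //; apply: lieB.
have mZ' : m (Z - Ad h Z) by rewrite -scaleN1r addrC; apply: msub.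
by apply/esym/eqP; rewrite -subr_eq0 (mK _ lZ mZ').
Qed.

Lemma Ad_fixed_commute h Z : h \in unitmx -> Ad h Z = Z -> h *m Z = Z *m h.
Proof. by move=> hu AdZ; rewrite -{2}AdZ /Ad -mulmxA mulVmx ?mulmx1. Qed.

End Decomposition.

Theorem lemma5p2 (k : closedFieldType) (p : nat) (N n : nat)
  (G K : 'M[k]_N -> Prop) (h : 'I_n -> 'M[k]_N) (m : 'M[k]_N -> Prop) :
  prime p -> p \in [pchar k] ->
  closed_subgroup G -> connected_grp G -> reductive G ->
  closed_subgroup K -> (forall x, K x -> G x) ->
  (forall i, normalizer G K (h i)) ->
  subspace m -> (forall X, m X -> lie G X) ->
  (forall X, lie K X -> m X -> X = 0) ->
  (forall X, lie G X -> exists Y Z, [/\ lie K Y, m Z & X = Y + Z]) ->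
  (forall i X, lie K X -> lie K (Ad (h i) X)) ->
  (forall i X, m X -> m (Ad (h i) X)) ->
  orbit_separable G h ->
  orbit_separable K h.
Proof.
move=> _ _ [_ Gu _ _ _] _ _ cK KG hN msub _ mK dec adK adm sepG v tv.
have [X lX eX] := sepG v (tangentS (fun y => orbitS KG) tv).
have [Y [Z [lY mZ eXYZ]]] := dec X lX.
exists Y => //; apply: functional_extensionality => i.
have hu : h i \in unitmx by apply: Gu; case: (hN i).
have AdZ : Ad (h i) Z = Z.
  apply: (Ad_fixed_of_decomposition msub mK lY (adK i _ lY) mZ (adm i _ mZ)).
  by rewrite -eXYZ; apply: lie_dorbit_mulmxV cK (hN i) hu _; rewrite -eX.
rewrite eX /dorbit eXYZ mulmxDl mulmxDr -(Ad_fixed_commute hu AdZ).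
by rewrite opprD addrACA subrr addr0.
Qed.
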